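(* The graph property $3\text{-}\mathsf{COLORABLE}$ does not belong to $\mathrm{LP}$.
   Context: Graphs. All graphs are finite, nonempty, simple, undirected and connected, and labeled: a graph is a triple $G=(V(G),E(G),\lambda_G)$ with labeling $\lambda_G:V(G)\to\{0,1\}^*$. A graph property is a set of graphs closed under label-preserving isomorphism. $3\text{-}\mathsf{COLORABLE}$ is the set of graphs $G$ admitting $f:V(G)\to\{0,1,2\}$ with $f(u)\ne f(v)$ for every edge $\{u,v\}$ (labels irrelevant). Identifiers. An identifier assignment of $G$ is a map $\mathrm{id}:V(G)\to\{0,1\}^*$; it is $r$-locally unique if $\mathrm{id}(u)\neq\mathrm{id}(v)$ for all distinct nodes $u,v$ at distance at most $2r$. Identifiers are ordered lexicographically (a proper prefix is smaller). Distributed Turing machines. Such a machine $M$ is a Turing machine with three one-way-infinite tapes (receiving, internal, sending) over the alphabet $\{\vdash,\square,\#,0,1\}$ (left-end marker, blank, separator, bits), with designated states start, pause, stop. It is executed on a graph $G$ under an (at least $1$-locally unique) identifier assignment $\mathrm{id}$: every node runs its own copy of $M$ in synchronous rounds. In each round, a node $u$ whose neighbors are $v_1,\dots,v_d$ in increasing identifier order (i) gets $m_1\#\cdots\#m_d\#$ on its receiving tape, where $m_i$ is the message sent to it by $v_i$ in the previous round (empty in the first round); (ii) its sending tape is emptied, its internal tape is initialized to $\lambda_G(u)\#\mathrm{id}(u)\#$ in the first round and otherwise keeps its content, and, unless $u$ reached stop in an earlier round, $M$ runs from state start with all heads leftmost until it enters pause or stop; (iii) $u$ sends to $v_i$ the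 $i$-th $\#$-separated bit string on its sending tape (the empty string if there is none). The execution terminates once all nodes are in stop; $G$ is accepted if at that point every node has exactly the bit string $1$ on its internal tape (symbols other than $0,1$ ignored). A local-polynomial machine is a distributed Turing machine for which there are a constant $c$ and a polynomial $q$ such that, on every graph and under all identifier assignments, all nodes reach stop within $c$ rounds, and in every round every node makes at most $q(n)$ computation steps, $n$ being the total length of its receiving- and internal-tape contents at the beginning of the round. $\mathrm{LP}$ is the class of graph properties $P$ for which there are a local-polynomial machine $M$ and a constant $r_{\mathrm{id}}\ge1$ such that for every graph $G$ and every $r_{\mathrm{id}}$-locally unique identifier assignment $\mathrm{id}$, $M$ accepts $G$ under $\mathrm{id}$ iff $G\in P$. *)

From mathcomp Require Import all_boot.
Set Implicit Arguments. Unset Strict Implicit. Unset Printing Implicit Defensive.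

(* Vertex set 'I_gn (every finite graph is isomorphic to such a one).  *)
Record graph := Graph {
  gn : nat;
  gadj : rel 'I_gn;
  glab : 'I_gn -> seq bool;
  g_nonempty : 0 < gn;
  g_sym : symmetric gadj;
  g_irr : irreflexive gadj;
  g_conn : forall u v : 'I_gn, connect gadj u v
}.

Definition vertex (G : graph) := 'I_(gn G).

Definition three_colorable (G : graph) : Prop :=
  exists f : 'I_(gn G) -> 'I_3, forall u v, gadj u v -> f u != f v.

Definition ident (G : graph) := 'I_(gn G) -> seq bool.

Fixpoint ball (G : graph) (k : nat) (u : 'I_(gn G)) : {set 'I_(gn G)} :=
  if k is k'.+1 then
    ball k' u :|: [set w | [exists v in ball k' u, gadj v w]]
  else [set u].

Definition locally_unique (G : graph) (r : nat) (id : ident G) : Prop :=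
  forall u v : 'I_(gn G), u != v -> v \in ball (2 * r) u -> id u != id v.

Fixpoint lexlt (s t : seq bool) : bool :=
  match s, t with
  | [::], [::] => false
  | [::], _ :: _ => true
  | _ :: _, [::] => false
  | a :: s', b :: t' => (~~ a && b) || ((a == b) && lexlt s' t')
  end.
Definition lexle (s t : seq bool) : bool := (s == t) || lexlt s t.

Inductive sym := Lend | Blank | Hash | S0 | S1.
Inductive move := ML | MR | MN.

Definition is_blank (a : sym) : bool := if a is Blank then true else false.
Definition sym_of_bit (b : bool) : sym := if b then S1 else S0.
Definition enc (s : seq bool) : seq sym := map sym_of_bit s.
Definition bits (t : seq sym) : seq bool :=
  pmap (fun a => match a with S0 => Some false | S1 => Some true | _ => None end) t.

(* A tape is the list of cells 1, 2, ...; cell 0 holds the left-end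
   marker; cells beyond the list are blank. *)
Definition read (t : seq sym) (p : nat) : sym :=
  if p is p'.+1 then nth Blank t p' else Lend.
Definition write (t : seq sym) (p : nat) (a : sym) : seq sym :=
  if p is p'.+1 then set_nth Blank t p' a else t.
Definition mv (p : nat) (m : move) : nat :=
  match m with ML => p.-1 | MR => p.+1 | MN => p end.

Fixpoint trim_rev (t : seq sym) : seq sym :=
  if t is a :: t' then (if is_blank a then trim_rev t' else t) else [::].
Definition content (t : seq sym) : seq sym := rev (trim_rev (rev t)).

Fixpoint split_hash (t : seq sym) : seq (seq sym) :=
  match t with
  | [::] => [:: [::]]
  | Hash :: t' => [::] :: split_hash t'
  | a :: t' => match split_hash t' with
               | w :: ws => (a :: w) :: ws
               | [::] => [:: [:: a]]
               end
  end.

Record DTM := Dtm {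
  nst : nat;
  q_start : 'I_nst;
  q_pause : 'I_nst;
  q_stop : 'I_nst;
  delta : 'I_nst -> sym -> sym -> sym ->
          'I_nst * (sym * sym * sym) * (move * move * move)
}.

Record config (M : DTM) := Config {
  cst : 'I_(nst M);
  tp1 : seq sym; tp2 : seq sym; tp3 : seq sym;  (* receiving, internal, sending *)
  hd1 : nat; hd2 : nat; hd3 : nat
}.

Definition step (M : DTM) (c : config M) : config M :=
  let: (q', (a1, a2, a3), (m1, m2, m3)) :=
     delta (cst c) (read (tp1 c) (hd1 c)) (read (tp2 c) (hd2 c)) (read (tp3 c) (hd3 c)) in
  Config q' (write (tp1 c) (hd1 c) a1) (write (tp2 c) (hd2 c) a2) (write (tp3 c) (hd3 c) a3)
         (mv (hd1 c) m1) (mv (hd2 c) m2) (mv (hd3 c) m3).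

Definition exec (M : DTM) (c : config M) (k : nat) : config M := iter k (@step M) c.

Definition halted (M : DTM) (c : config M) : bool :=
  (cst c == q_pause M) || (cst c == q_stop M).

Definition halts_at (M : DTM) (c : config M) (k : nat) : Prop :=
  halted (exec c k) /\ forall j, j < k -> ~~ halted (exec c j).

Definition init_config (M : DTM) (recv internal : seq sym) : config M :=
  Config (q_start M) recv internal [::] 0 0 0.

Record gstate (G : graph) := GState {
  itape : 'I_(gn G) -> seq sym;
  stopped : 'I_(gn G) -> bool;
  out : 'I_(gn G) -> 'I_(gn G) -> seq bool   (* out u v = message from u to v *)
}.

Definition init_gstate (G : graph) : gstate G :=
  GState (fun _ => [::]) (fun _ => false) (fun _ _ => [::]).

Definition nbrs (G : graph) (id : ident G) (u : 'I_(gn G)) : seq 'I_(gn G) :=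
  sort (fun v w => lexle (id v) (id w)) [seq v <- enum 'I_(gn G) | gadj u v].

Definition recv_tape (G : graph) (id : ident G) (s : gstate G) (u : 'I_(gn G)) :=
  flatten [seq enc (out s v u) ++ [:: Hash] | v <- nbrs id u].

Definition internal_tape (G : graph) (id : ident G) (first : bool) (s : gstate G)
    (u : 'I_(gn G)) : seq sym :=
  if first then enc (glab u) ++ Hash :: enc (id u) ++ [:: Hash] else itape s u.

Definition round_rel (M : DTM) (G : graph) (id : ident G) (first : bool)
    (s s' : gstate G) : Prop :=
  forall u : 'I_(gn G),
    let recv := recv_tape id s u in
    let internal := internal_tape id first s u in
    if stopped s u then
      [/\ itape s' u = internal, stopped s' u = true & forall v, out s' u v = [::]]
    else exists k, halts_at (init_config M recv internal) k /\
      let c := exec (init_config M recv internal) k in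
      [/\ itape s' u = tp2 c, stopped s' u = (cst c == q_stop M) &
          forall v, out s' u v =
            if gadj u v then
              bits (nth [::] (split_hash (content (tp3 c))) (index v (nbrs id u)))
            else [::]].

Inductive reach (M : DTM) (G : graph) (id : ident G) : nat -> gstate G -> Prop :=
| reach0 : reach M id 0 (init_gstate G)
| reachS r s s' : reach M id r s -> round_rel M id (r == 0) s s' -> reach M id r.+1 s'.

Definition accepts (M : DTM) (G : graph) (id : ident G) : Prop :=
  exists r (s : gstate G), [/\ reach M id r s, forall u, stopped s u &
                              forall u, bits (itape s u) = [:: true]].

Definition peval (q : seq nat) (n : nat) : nat :=
  \sum_(i < size q) nth 0 q i * n ^ i.

Definition local_polynomial (M : DTM) : Prop :=
  exists (c : nat) (q : seq nat),
    forall (G : graph) (id : ident G), locally_unique 1 id ->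
      (forall r (s : gstate G), reach M id r s -> forall u, ~~ stopped s u ->
         let recv := recv_tape id s u in
         let internal := internal_tape id (r == 0) s u in
         exists k, halts_at (init_config M recv internal) k /\
                   k <= peval q (size (content recv) + size (content internal)))
      /\ (forall s : gstate G, reach M id c s -> forall u, stopped s u).

Definition graph_property := graph -> Prop.

Definition LP (P : graph_property) : Prop :=
  exists (M : DTM) (rid : nat),
    [/\ local_polynomial M, 1 <= rid &
        forall (G : graph) (id : ident G), locally_unique rid id ->
          (accepts M id <-> P G)].

(* The argument is an indistinguishability (covering) argument.  Let C(n) be
   the square of the n-cycle (i ~ i+1, i+2 mod n).  C(n) is 3-colorable iff
   3 divides n.  For N = 6R+7 the graph C(3N) is 3-colorable, C(N) is not, and
   reduction mod N is a label-preserving covering map C(3N) -> C(N), i.e. a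
   graph morphism that is a bijection on every neighbourhood.

   Give C(N) injective identifiers and C(3N) their pull-back along the
   covering.  Distinct nodes with the same pulled-back identifier are at
   cyclic distance N > 4R, so the pull-back is R-locally unique.  Every node
   of C(3N) then sees exactly the same messages, in the same order, as its
   image in C(N); hence the execution on C(3N) is the lift of the execution on
   C(N), and a machine accepting C(3N) must also accept C(N). *)
From mathcomp Require Import all_boot zify.
From Stdlib Require Import FunctionalExtensionality.
Set Implicit Arguments. Unset Strict Implicit. Unset Printing Implicit Defensive.

(* The lexicographic order on identifiers is a total order; this makes the
   order in which a node lists its neighbours uniquely determined. *)
Lemma lexlt_irr s : lexlt s s = false.
Proof. by elim: s => [|a s IH] //=; rewrite IH; case: a. Qed.

Lemma lexlt_trans s t u : lexlt s t -> lexlt t u -> lexlt s u.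
Proof.
elim: s t u => [|a s IH] [|b t] [|c u] //=.
by move: (IH t u); case: a; case: b; case: c => //=; rewrite ?orbF ?andbF ?andbT.
Qed.

Lemma lexlt_total s t : [|| s == t, lexlt s t | lexlt t s].
Proof.
elim: s t => [|a s IH] [|b t] //=; move: (IH t); rewrite eqseq_cons.
by case: a; case: b => //=; rewrite ?orbF ?andbF ?andbT.
Qed.

Lemma lexle_total : total lexle.
Proof.
move=> s t; rewrite /lexle (eq_sym t); move: (lexlt_total s t).
by case: (s == t) => //=; rewrite orbC.
Qed.

Lemma lexle_trans : transitive lexle.
Proof.
move=> t s u /orP[/eqP->//|st] /orP[/eqP<-|tu]; first by rewrite /lexle st orbT.
by rewrite /lexle (lexlt_trans st tu) orbT.
Qed.

Lemma lexle_anti : antisymmetric lexle.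
Proof.
move=> s t /andP[/orP[/eqP//|st] /orP[/eqP->//|ts]].
by move: (lexlt_trans st ts); rewrite lexlt_irr.
Qed.

(* Executions are deterministic: a run halts at a unique step, hence each
   round and each sequence of rounds has a unique outcome. *)
Lemma halts_at_uniq (M : DTM) (c : config M) k1 k2 :
  halts_at c k1 -> halts_at c k2 -> k1 = k2.
Proof.
move=> [h1 n1] [h2 n2]; case: (ltngtP k1 k2) => // lt.
- by move: (n2 _ lt); rewrite h1.
- by move: (n1 _ lt); rewrite h2.
Qed.

Lemma gstate_ext (G : graph) (s1 s2 : gstate G) :
  itape s1 =1 itape s2 -> stopped s1 =1 stopped s2 ->
  (forall u, out s1 u =1 out s2 u) -> s1 = s2.
Proof.
case: s1 s2 => i1 st1 o1 [i2 st2 o2] /= ei est eo.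
rewrite (functional_extensionality _ _ ei) (functional_extensionality _ _ est).
by congr GState; do 2 apply: functional_extensionality => ?; apply: eo.
Qed.

Lemma round_det (M : DTM) (G : graph) (id : ident G) first (s s1 s2 : gstate G) :
  round_rel M id first s s1 -> round_rel M id first s s2 -> s1 = s2.
Proof.
move=> h1 h2; have same u : [/\ itape s1 u = itape s2 u,
    stopped s1 u = stopped s2 u & out s1 u =1 out s2 u].
  move: (h1 u) (h2 u) => /=; case: (stopped s u).
    by move=> [-> -> o1] [-> -> o2]; split=> // v; rewrite o1 o2.
  move=> [k1 [hk1 [-> -> o1]]] [k2 [hk2 [-> -> o2]]].
  by rewrite (halts_at_uniq hk1 hk2); split=> // v; rewrite o1 o2 (halts_at_uniq hk1 hk2).
by apply: gstate_ext => u; case: (same u).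
Qed.

Lemma reach_det (M : DTM) (G : graph) (id : ident G) r (s1 s2 : gstate G) :
  reach M id r s1 -> reach M id r s2 -> s1 = s2.
Proof.
move=> h; elim: h s2 => [|r' t t' _ IH hr] s2 h2; inversion h2 => //; subst.
by rewrite -(IH _ H0) in H1; exact: round_det hr H1.
Qed.

Definition rounds_halt (M : DTM) (G : graph) (id : ident G) : Prop :=
  forall r (s : gstate G), reach M id r s -> forall u, ~~ stopped s u ->
    exists k, halts_at (init_config M (recv_tape id s u) (internal_tape id (r == 0) s u)) k.

Lemma local_polynomial_rounds_halt (M : DTM) (G : graph) (id : ident G) :
  local_polynomial M -> locally_unique 1 id -> rounds_halt M id.
Proof.
move=> [c [q lp]] lu r s hs u hu; have [halt _] := lp G id lu.
by have [k [hk _]] := halt r s hs u hu; exists k.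
Qed.

Lemma reach_ex (M : DTM) (G : graph) (id : ident G) :
  rounds_halt M id -> forall r, exists s, reach M id r s.
Proof.
move=> halt; elim=> [|r [s hs]]; first by exists (init_gstate G); constructor.
pose cfg u := init_config M (recv_tape id s u) (internal_tape id (r == 0) s u).
have /fin_all_exists [kf kfP] : forall u, exists k, ~~ stopped s u -> halts_at (cfg u) k.
  move=> u; case e: (stopped s u); first by exists 0.
  by have [k hk] := halt _ _ hs u (negbT e); exists k.
pose fin u := exec (cfg u) (kf u).
exists (GState (fun u => if stopped s u then internal_tape id (r == 0) s u else tp2 (fin u))
  (fun u => stopped s u || (cst (fin u) == q_stop M))
  (fun u v => if stopped s u || ~~ gadj u v then [::] else
      bits (nth [::] (split_hash (content (tp3 (fin u)))) (index v (nbrs id u))))).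
apply: reachS hs _ => u /=; case e: (stopped s u) => //=.
exists (kf u); split; first by apply: kfP; rewrite e.
by split=> // v; case: (gadj u v).
Qed.

Lemma mem_nbrs (G : graph) (id : ident G) u v : (v \in nbrs id u) = gadj u v.
Proof. by rewrite /nbrs mem_sort mem_filter mem_enum andbT. Qed.

Lemma index_map_in (T1 T2 : eqType) (f : T1 -> T2) (s : seq T1) y :
  y \in s -> {in s, forall z, f z = f y -> z = y} -> index (f y) (map f s) = index y s.
Proof.
elim: s => [|a s IH] //= ys inj; case: (eqVneq a y) => [->|ne]; first by rewrite !eqxx.
have -> : (f a == f y) = false.
  by apply/negbTE/eqP => /(inj a (mem_head _ _)) e; rewrite e eqxx in ne.
rewrite IH //; first by move: ys; rewrite in_cons eq_sym (negbTE ne).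
by move=> z zs; apply: inj; rewrite in_cons zs orbT.
Qed.

Definition pull_id (G H : graph) (phi : 'I_(gn H) -> 'I_(gn G)) (id : ident G) : ident H :=
  fun x => id (phi x).

Section Covering.
Variables (M : DTM) (G H : graph) (phi : 'I_(gn H) -> 'I_(gn G)) (idG : ident G).
Hypothesis idG_inj : injective idG.
Hypothesis phi_lab : forall x, glab x = glab (phi x).
Hypothesis phi_adj : forall x y, gadj x y -> gadj (phi x) (phi y).
Hypothesis phi_nbr_onto : forall x v, gadj (phi x) v -> exists2 y, gadj x y & phi y = v.
Hypothesis phi_nbr_inj : forall x y y', gadj x y -> gadj x y' -> phi y = phi y' -> y = y'.

Local Notation idH := (pull_id phi idG).

Definition lift (s : gstate G) : gstate H :=
  GState (fun x => itape s (phi x)) (fun x => stopped s (phi x))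
   (fun x y => if gadj x y then out s (phi x) (phi y) else [::]).

Lemma nbrs_lift x : map phi (nbrs idH x) = nbrs idG (phi x).
Proof.
rewrite /nbrs -[sort _ _]/(sort (relpre phi (fun a b => lexle (idG a) (idG b))) _) -sort_map.
apply/perm_sortP.
- by move=> a b; apply: lexle_total.
- by move=> a b c; apply: lexle_trans.
- by move=> a b /lexle_anti; apply: idG_inj.
have uniq_nbrs (K : graph) (z : 'I_(gn K)) : uniq [seq v <- enum 'I_(gn K) | gadj z v].
  by apply: filter_uniq; apply: enum_uniq.
apply: uniq_perm => //.
  rewrite map_inj_in_uniq // => a b.
  by rewrite !mem_filter => /andP[ha _] /andP[hb _]; exact: phi_nbr_inj ha hb.
move=> v; rewrite mem_filter mem_enum andbT; apply/mapP/idP.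
  by move=> [y]; rewrite mem_filter => /andP[hy _] ->; apply: phi_adj.
by move=> /phi_nbr_onto [y hy <-]; exists y; rewrite // mem_filter hy mem_enum.
Qed.

Lemma index_nbrs_lift x y : gadj x y ->
  index y (nbrs idH x) = index (phi y) (nbrs idG (phi x)).
Proof.
move=> xy; rewrite -nbrs_lift index_map_in ?mem_nbrs //.
by move=> z; rewrite mem_nbrs => xz; exact: phi_nbr_inj xz xy.
Qed.

Lemma recv_lift s x : recv_tape idH (lift s) x = recv_tape idG s (phi x).
Proof.
rewrite /recv_tape -nbrs_lift -map_comp; congr flatten; apply/eq_in_map => v.
by rewrite mem_nbrs /= => xv; rewrite g_sym xv.
Qed.

Lemma internal_lift first s x :
  internal_tape idH first (lift s) x = internal_tape idG first s (phi x).
Proof. by rewrite /internal_tape phi_lab. Qed.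

Lemma round_lift first s s' : round_rel M idG first s s' ->
  round_rel M idH first (lift s) (lift s').
Proof.
move=> h x; move: (h (phi x)) => /=; rewrite recv_lift internal_lift.
case: (stopped s (phi x)); first by move=> [-> -> o]; split=> // v; case: ifP.
move=> [k [hk [-> -> o]]]; exists k; split=> //; split=> // v.
by case xv: (gadj x v); rewrite // o (phi_adj xv) index_nbrs_lift.
Qed.

Lemma reach_lift r s : reach M idG r s -> reach M idH r (lift s).
Proof.
elim=> [|r' t t' _ IH hr]; last by apply: reachS IH _; exact: round_lift.
have -> : lift (init_gstate G) = init_gstate H.
  by apply: gstate_ext => //= x y; case: ifP.
by constructor.
Qed.

Lemma accepts_cover : (forall u, exists x, phi x = u) -> rounds_halt M idG ->
  accepts M idH -> accepts M idG.
Proof.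
move=> onto halt [r [t [ht t_stop t_out]]]; have [s hs] := reach_ex halt r.
have et := reach_det (reach_lift hs) ht; subst t.
exists r, s; split=> // u; have [x <-] := onto u.
- exact: t_stop x.
- exact: t_out x.
Qed.

End Covering.

Lemma injective_locally_unique (G : graph) r (id : ident G) :
  injective id -> locally_unique r id.
Proof. by move=> inj u v uv _; apply: contra uv => /eqP /inj ->. Qed.

Definition unary_id (G : graph) : ident G := fun u => nseq u true.
Arguments unary_id : clear implicits.

Lemma unary_id_inj (G : graph) : injective (unary_id G).
Proof. by move=> u v /(congr1 size); rewrite !size_nseq => /val_inj. Qed.

(* The square of the n-cycle: i ~ j iff j = i +- 1 or j = i +- 2 mod n. *)
Definition cyc2 (n u v : nat) : bool :=
  [|| v == u + 1, v == u + 2, v + n == u + 1, v + n == u + 2,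
      u == v + 1, u == v + 2, u + n == v + 1 | u + n == v + 2].

Definition cyc2_rel (n : nat) : rel 'I_n := fun u v => cyc2 n u v.
Arguments cyc2_rel : clear implicits.

Lemma cyc2_sym n : symmetric (cyc2_rel n).
Proof. by move=> u v; rewrite /cyc2_rel /cyc2; lia. Qed.

Lemma cyc2_irr n : 2 < n -> irreflexive (cyc2_rel n).
Proof. by move=> n_gt2 u; rewrite /cyc2_rel /cyc2; lia. Qed.

Lemma cyc2_conn n (u v : 'I_n) : connect (cyc2_rel n) u v.
Proof.
have n0 : 0 < n by apply: leq_ltn_trans (ltn_ord u).
have from0 i (hi : i < n) : connect (cyc2_rel n) (Ordinal n0) (Ordinal hi).
  elim: i hi => [|i IH] hi; first by rewrite (bool_irrelevance hi n0).
  by apply: connect_trans (IH (ltnW hi)) (connect1 _); rewrite /cyc2_rel /cyc2 /=; lia.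
case: u v => [a ha] [b hb]; apply: connect_trans (from0 b hb).
by rewrite (sym_connect_sym (@cyc2_sym n)).
Qed.

Definition sqcycle (n : nat) (n_gt2 : 2 < n) : graph :=
  @Graph n (cyc2_rel n) (fun _ => [::]) (ltnW (ltnW n_gt2))
    (@cyc2_sym n) (cyc2_irr n_gt2) (@cyc2_conn n).

Lemma sqcycle_colorable n (n_gt2 : 2 < n) : 3 %| n -> three_colorable (sqcycle n_gt2).
Proof.
case/dvdnP=> k ek; exists (fun u => Ordinal (ltn_pmod u (isT : 0 < 3))) => u v /=.
rewrite /cyc2_rel /cyc2 -val_eqE /=; move: (ltn_ord u) (ltn_ord v); lia.
Qed.

Lemma third_color (a b c d : 'I_3) :
  a != b -> a != c -> b != c -> d != b -> d != c -> d = a.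
Proof.
case: a b c d => [a ha] [b hb] [c hc] [d hd]; rewrite -!val_eqE /= => *.
by apply: val_inj => /=; lia.
Qed.

Lemma mod_add_small n i d : d < n ->
  (i + d) %% n = i %% n + d \/ (i + d) %% n + n = i %% n + d.
Proof.
move=> dn; rewrite -modnDml; have ia : i %% n < n by rewrite ltn_mod; lia.
case: (ltnP (i %% n + d) n) => h; first by left; rewrite modn_small.
right; rewrite -{1}(subnK h) modnDr modn_small; lia.
Qed.

(* A proper 3-coloring of the squared cycle is 3-periodic around the cycle,
   which is impossible when 3 does not divide its length. *)
Lemma sqcycle_not_colorable n (n_gt2 : 2 < n) :
  ~~ (3 %| n) -> ~ three_colorable (sqcycle n_gt2).
Proof.
move=> n3 [f proper]; have n0 : 0 < n by lia.
pose g i := f (Ordinal (ltn_pmod i n0)).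
have g_adj i d : 0 < d < 3 -> g i != g (i + d).
  move=> hd; apply: proper; rewrite /= /cyc2_rel /cyc2 /=.
  by case: (@mod_add_small n i d ltac:(lia)) => ->; lia.
have g3 i : g (i + 3) = g i.
  apply: (@third_color _ (g (i + 1)) (g (i + 2))); rewrite ?g_adj //.
  - by have := g_adj (i + 1) 1 isT; rewrite -addnA.
  - by have := g_adj (i + 1) 2 isT; rewrite -addnA eq_sym.
  - by have := g_adj (i + 2) 1 isT; rewrite -addnA eq_sym.
have g3k k : g (3 * k) = g 0 by elim: k => [//|k IH]; rewrite mulnS addnC g3.
have gn : g n = g 0 by congr f; apply: val_inj; rewrite /= modnn mod0n.
have d_pos : 0 < n %% 3 < 3 by move: n3; rewrite /dvdn; lia.
by have := g_adj (3 * (n %/ 3)) (n %% 3) d_pos; rewrite g3k (mulnC 3) -divn_eq gn eqxx.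
Qed.

Lemma sqcycle_ball n (n_gt2 : 2 < n) k (u v : 'I_n) : v \in ball (G := sqcycle n_gt2) k u ->
  (v <= u + 2 * k /\ u <= v + 2 * k) \/ v + n <= u + 2 * k \/ u + n <= v + 2 * k.
Proof.
elim: k v => [|k IH] v /=; first by rewrite inE => /eqP ->; left; lia.
rewrite !inE => /orP[/IH|/existsP[w /andP[/IH hw]]]; first lia.
by move: hw (ltn_ord w) (ltn_ord v) (ltn_ord u); rewrite /cyc2_rel /cyc2; lia.
Qed.

Lemma fold_cases N x : 0 < N -> x < 3 * N ->
  x %% N < N /\ [\/ x = x %% N, x = x %% N + N | x = x %% N + 2 * N].
Proof.
move=> N0 hx; split; first by rewrite ltn_mod.
have hq : x %/ N < 3 by rewrite ltn_divLR.
move: (divn_eq x N) hq; case: (x %/ N) => [|[|[|q]]] e hq //.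
- by constructor 1; lia.
- by constructor 2; lia.
- by constructor 3; lia.
Qed.

Lemma fold_adj N x y : 4 < N -> x < 3 * N -> y < 3 * N ->
  cyc2 (3 * N) x y -> cyc2 N (x %% N) (y %% N).
Proof.
move=> hN hx hy; have N0 : 0 < N by lia.
have [hxN ex] := fold_cases N0 hx; have [hyN ey] := fold_cases N0 hy.
move: (x %% N) (y %% N) ex ey hxN hyN => a b ex ey ha hb.
by rewrite /cyc2; case: ex => ->; case: ey => ->; lia.
Qed.

Lemma fold_nbr_inj N x y y' : 4 < N -> y < 3 * N -> y' < 3 * N ->
  cyc2 (3 * N) x y -> cyc2 (3 * N) x y' -> y %% N = y' %% N -> y = y'.
Proof.
move=> hN hy hy'; have N0 : 0 < N by lia.
have [hyN ey] := fold_cases N0 hy; have [hyN' ey'] := fold_cases N0 hy'.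
move: (y %% N) (y' %% N) ey ey' hyN hyN' => a b ey ey' ha hb.
by rewrite /cyc2; case: ey => ->; case: ey' => ->; lia.
Qed.

Lemma cyc2_wrap N a v : cyc2 N a v ->
  [\/ cyc2 (3 * N) a v, (v + N == a + 1) || (v + N == a + 2)
     | (a + N == v + 1) || (a + N == v + 2)].
Proof.
rewrite /cyc2 => /orP[h|/orP[h|/orP[h|/orP[h|/orP[h|/orP[h|/orP[h|h]]]]]]];
  by [constructor 1; rewrite h ?orbT | constructor 2; rewrite h ?orbT
     | constructor 3; rewrite h ?orbT].
Qed.

(* Each neighbour v of x mod N lifts to a neighbour v + k N of x: the block k
   is that of x, shifted by one when the edge crosses the cut. *)
Lemma fold_nbr_onto N x v : 4 < N -> x < 3 * N -> v < N -> cyc2 N (x %% N) v ->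
  exists2 k, k < 3 & cyc2 (3 * N) x (v + k * N).
Proof.
move=> hN hx hv; have N0 : 0 < N by lia.
have [hxN ex] := fold_cases N0 hx.
move: (x %% N) ex hxN => a ex ha /cyc2_wrap wrap.
case: ex => ex; case: wrap => w; rewrite /cyc2 in w.
- by exists 0 => //; rewrite /cyc2; lia.
- by exists 1 => //; rewrite /cyc2; lia.
- by exists 2 => //; rewrite /cyc2; lia.
- by exists 1 => //; rewrite /cyc2; lia.
- by exists 2 => //; rewrite /cyc2; lia.
- by exists 0 => //; rewrite /cyc2; lia.
- by exists 2 => //; rewrite /cyc2; lia.
- by exists 0 => //; rewrite /cyc2; lia.
- by exists 1 => //; rewrite /cyc2; lia.
Qed.

Section TripleCover.
Variable N : nat.
Hypothesis N_gt4 : 4 < N.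

Let N_pos : 0 < N. Proof. lia. Qed.
Let N_gt2 : 2 < N. Proof. lia. Qed.
Let N3_gt2 : 2 < 3 * N. Proof. lia. Qed.

Definition base_cycle : graph := sqcycle N_gt2.
Definition triple_cycle : graph := sqcycle N3_gt2.

Definition fold (x : 'I_(gn triple_cycle)) : 'I_(gn base_cycle) :=
  Ordinal (ltn_pmod x N_pos).

Lemma fold_onto u : exists x, fold x = u.
Proof.
have ux : (u : nat) < 3 * N by move: (ltn_ord u) => /=; lia.
by exists (Ordinal ux); apply: val_inj; rewrite /= modn_small.
Qed.

Lemma fold_gadj x y : gadj x y -> gadj (fold x) (fold y).
Proof. exact: fold_adj. Qed.

Lemma fold_gadj_onto x v : gadj (fold x) v -> exists2 y, gadj x y & fold y = v.
Proof.
move=> xv; have vN : (v : nat) < N := ltn_ord v.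
have [k k3 adj] := fold_nbr_onto N_gt4 (ltn_ord x) vN xv.
have vk : v + k * N < 3 * N by nia.
by exists (Ordinal vk) => //; apply: val_inj; rewrite /= addnC modnMDl modn_small.
Qed.

Lemma fold_nbr_injective x y y' : gadj x y -> gadj x y' -> fold y = fold y' -> y = y'.
Proof.
move=> xy xy' /(congr1 val) /= e; apply: val_inj.
exact: fold_nbr_inj N_gt4 (ltn_ord y) (ltn_ord y') xy xy' e.
Qed.

(* Distinct nodes in the same fibre are N > 4R apart, so pulled-back
   injective identifiers are R-locally unique. *)
Lemma fold_locally_unique R (id : ident base_cycle) : 4 * R < N -> injective id ->
  locally_unique R (pull_id fold id).
Proof.
move=> RN inj u v uv /sqcycle_ball near; apply: contra uv => /eqP /inj /(congr1 val) /= e.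
have [hu eu] := fold_cases N_pos (ltn_ord u); have [hv ev] := fold_cases N_pos (ltn_ord v).
rewrite -val_eqE /=; move: (ltn_ord u) (ltn_ord v) near => /= ub vb.
move: (nat_of_ord u) (nat_of_ord v) eu ev e ub vb => a b eu ev e ub vb.
by case: eu => ->; case: ev => ->; lia.
Qed.

End TripleCover.
Arguments fold {N} N_gt4 x.

(* With N = 6R+7 (not a multiple of 3, and N > 4R) an R-local machine
   accepting the 3-colorable C(3N) would also accept C(N). *)
Theorem corollary9p2 : ~ LP three_colorable.
Proof.
move=> [M [R [lp _ decides]]]; have N_gt4 : 4 < 6 * R + 7 by lia.
pose G := base_cycle N_gt4; pose H := triple_cycle N_gt4.
have id_inj := @unary_id_inj G.
have G_halts : rounds_halt M (unary_id G).
  exact: local_polynomial_rounds_halt lp (injective_locally_unique (r := 1) id_inj).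
have H_accepted : accepts M (pull_id (fold N_gt4) (unary_id G)).
  have lu : locally_unique R (pull_id (fold N_gt4) (unary_id G)).
    by apply: (fold_locally_unique _ id_inj); lia.
  apply/(decides H _ lu).
  by apply: sqcycle_colorable; rewrite /dvdn; lia.
have G_accepted := accepts_cover (phi := fold N_gt4) id_inj (fun _ => erefl)
  (@fold_gadj _ _) (@fold_gadj_onto _ _) (@fold_nbr_injective _ _) (@fold_onto _ _)
  G_halts H_accepted.
have G_not_colorable : ~ three_colorable G.
  by apply: sqcycle_not_colorable; rewrite /dvdn; lia.
exact/G_not_colorable/(decides G _ (injective_locally_unique (r := R) id_inj)).
Qed.
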